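(* Let $T:\mathbf{Set}\to\mathbf{Set}$ be a functor and $\Lambda$ a strongly expressive set of monotone singleton-preserving predicate liftings for $T$. Then for all $T$-coalgebras $(X,\xi)$, $(Y,\zeta)$ and states $x\in X$, $y\in Y$: $x$ and $y$ are $\Lambda$-bisimilar if and only if they are behaviourally equivalent.
   Context: An $n$-ary predicate lifting for $T$ is a family $\lambda_X:(\mathcal{P}X)^n\to\mathcal{P}(TX)$ natural w.r.t. preimages ($\lambda_X(f^{-1}[A_1],\dots)=(Tf)^{-1}[\lambda_Y(A_1,\dots)]$); monotone if monotone in every argument; singleton-preserving if $|\lambda_X(\{x_1\},\dots,\{x_n\})|=1$ always. $\Lambda$ is strongly expressive if for every set $X$ and $t\in TX$ there are $\lambda/n\in\Lambda$ and $x_i\in X$ with $\{t\}=\lambda_X(\{x_1\},\dots,\{x_n\})$. A $T$-coalgebra is a pair $(X,\xi)$ with $\xi:X\to TX$; a morphism $h:(X,\xi)\to(Y,\zeta)$ is a map with $Th\circ\xi=\zeta\circ h$. States $x\in X$, $y\in Y$ are behaviourally equivalent if there are a coalgebra $(Z,\theta)$ and morphisms $f:(X,\xi)\to(Z,\theta)$, $g:(Y,\zeta)\to(Z,\theta)$ with $f(x)=g(y)$. For $S\subseteq X\times Y$ and $A\subseteq X$, $S[A]=\{y\mid\exists a\in A.\,a\,S\,y\}$. A $\Lambda$-simulation is a relation $S\subseteq X\times Y$ such that for all $\lambda/n\in\Lambda$, $X_1,\dots,X_n\subseteq X$ and $x\,S\,y$: $\xi(x)\in\lambda_X(X_1,\dots,X_n)$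 implies $\zeta(y)\in\lambda_Y(S[X_1],\dots,S[X_n])$. A $\Lambda$-bisimulation is a $\Lambda$-simulation $S$ whose converse is also a $\Lambda$-simulation; $x,y$ are $\Lambda$-bisimilar if some $\Lambda$-bisimulation relates them. *)

(* Sets are modelled by Rocq types, subsets by predicates X -> Prop. *)
From Stdlib Require Import Fin.

Definition is_functor (T : Type -> Type)
  (fmap : forall X Y : Type, (X -> Y) -> T X -> T Y) : Prop :=
  (forall (X : Type) (t : T X), fmap X X (fun x => x) t = t) /\
  (forall (X Y Z : Type) (f : X -> Y) (g : Y -> Z) (t : T X),
      fmap X Z (fun x => g (f x)) t = fmap Y Z g (fmap X Y f t)).

(* An n-ary predicate lifting candidate: lambda_X : (P X)^n -> P (T X). *)
Definition pred_lifting (T : Type -> Type) (n : nat) : Type :=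
  forall X : Type, (Fin.t n -> X -> Prop) -> T X -> Prop.

Definition natural_lifting (T : Type -> Type)
  (fmap : forall X Y : Type, (X -> Y) -> T X -> T Y)
  (n : nat) (lam : pred_lifting T n) : Prop :=
  forall (X Y : Type) (f : X -> Y) (A : Fin.t n -> Y -> Prop) (t : T X),
    lam X (fun i x => A i (f x)) t <-> lam Y A (fmap X Y f t).

Definition monotone_lifting (T : Type -> Type) (n : nat)
  (lam : pred_lifting T n) : Prop :=
  forall (X : Type) (A B : Fin.t n -> X -> Prop),
    (forall i x, A i x -> B i x) ->
    forall t, lam X A t -> lam X B t.

Definition singleton_preserving (T : Type -> Type) (n : nat)
  (lam : pred_lifting T n) : Prop :=
  forall (X : Type) (xs : Fin.t n -> X),
    exists t : T X, forall t' : T X, lam X (fun i x => x = xs i) t' <-> t' = t.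

(* A set Lambda of predicate liftings, presented as a family indexed by L
   with arities ar. *)
Definition strongly_expressive (T : Type -> Type) (L : Type) (ar : L -> nat)
  (lam : forall l : L, pred_lifting T (ar l)) : Prop :=
  forall (X : Type) (t : T X),
    exists (l : L) (xs : Fin.t (ar l) -> X),
      forall t' : T X, lam l X (fun i x => x = xs i) t' <-> t' = t.

Definition coalg_morphism (T : Type -> Type)
  (fmap : forall X Y : Type, (X -> Y) -> T X -> T Y)
  (X : Type) (xi : X -> T X) (Y : Type) (zeta : Y -> T Y) (h : X -> Y) : Prop :=
  forall x : X, fmap X Y h (xi x) = zeta (h x).

Definition behav_equiv (T : Type -> Type)
  (fmap : forall X Y : Type, (X -> Y) -> T X -> T Y)
  (X : Type) (xi : X -> T X) (Y : Type) (zeta : Y -> T Y) (x : X) (y : Y) : Prop :=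
  exists (Z : Type) (theta : Z -> T Z) (f : X -> Z) (g : Y -> Z),
    coalg_morphism T fmap X xi Z theta f /\
    coalg_morphism T fmap Y zeta Z theta g /\ f x = g y.

Definition rel_image {X Y : Type} (S : X -> Y -> Prop) (A : X -> Prop) : Y -> Prop :=
  fun y => exists a, A a /\ S a y.

Definition lambda_simulation (T : Type -> Type) (L : Type) (ar : L -> nat)
  (lam : forall l : L, pred_lifting T (ar l))
  (X : Type) (xi : X -> T X) (Y : Type) (zeta : Y -> T Y)
  (S : X -> Y -> Prop) : Prop :=
  forall (l : L) (As : Fin.t (ar l) -> X -> Prop) (x : X) (y : Y),
    S x y -> lam l X As (xi x) ->
    lam l Y (fun i => rel_image S (As i)) (zeta y).

Definition lambda_bisimulation (T : Type -> Type) (L : Type) (ar : L -> nat)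
  (lam : forall l : L, pred_lifting T (ar l))
  (X : Type) (xi : X -> T X) (Y : Type) (zeta : Y -> T Y)
  (S : X -> Y -> Prop) : Prop :=
  lambda_simulation T L ar lam X xi Y zeta S /\
  lambda_simulation T L ar lam Y zeta X xi (fun b a => S a b).

Definition lambda_bisimilar (T : Type -> Type) (L : Type) (ar : L -> nat)
  (lam : forall l : L, pred_lifting T (ar l))
  (X : Type) (xi : X -> T X) (Y : Type) (zeta : Y -> T Y) (x : X) (y : Y) : Prop :=
  exists S : X -> Y -> Prop,
    lambda_bisimulation T L ar lam X xi Y zeta S /\ S x y.

(* A Λ-simulation S can be quotiented: identify the states of X + Y related by
   the equivalence closure of S.  Strong expressivity describes each ξ(x) as
   λ({x_1},...,{x_n}); pushing this forward along the quotient map and using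
   the simulation property, monotonicity and naturality shows that both ξ(x)
   and ζ(y) are mapped into λ({[x_1]},...,{[x_n]}), which is a singleton.
   Hence the quotient map respects the coalgebra structure, and the quotient
   is a coalgebra identifying x and y.  Conversely, the kernel of a cospan of
   coalgebra morphisms is a Λ-bisimulation by monotonicity and naturality. *)

From Stdlib Require Import Fin Relations.
From Stdlib Require Import ClassicalEpsilon FunctionalExtensionality PropExtensionality.

Section Liftings.

Variables (T : Type -> Type) (fmap : forall X Y : Type, (X -> Y) -> T X -> T Y)
  (L : Type) (ar : L -> nat) (lam : forall l : L, pred_lifting T (ar l)).
Hypothesis lam_natural : forall l, natural_lifting T fmap (ar l) (lam l).
Hypothesis lam_monotone : forall l, monotone_lifting T (ar l) (lam l).

Lemma lifting_fmap_image (l : L) (X Y : Type) (f : X -> Y)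
    (As : Fin.t (ar l) -> X -> Prop) (t : T X) :
  lam l X As t ->
  lam l Y (fun i => rel_image (fun a b => f a = b) (As i)) (fmap X Y f t).
Proof.
  intros H; apply lam_natural.
  apply (lam_monotone l X As); [|exact H].
  intros i a Ha; exists a; split; [exact Ha | reflexivity].
Qed.

Lemma kernel_lambda_simulation (X : Type) (xi : X -> T X) (Y : Type) (zeta : Y -> T Y)
    (Z : Type) (theta : Z -> T Z) (f : X -> Z) (g : Y -> Z)
    (Hf : coalg_morphism T fmap X xi Z theta f)
    (Hg : coalg_morphism T fmap Y zeta Z theta g)
    (R : X -> Y -> Prop) (HR : forall a b, R a b <-> f a = g b) :
  lambda_simulation T L ar lam X xi Y zeta R.
Proof.
  intros l As a b Hab Ha.
  pose proof (lifting_fmap_image l X Z f As (xi a) Ha) as HZ.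
  rewrite Hf, (proj1 (HR a b) Hab), <- Hg in HZ.
  apply lam_natural in HZ.
  eapply lam_monotone; [|exact HZ].
  intros i b' [a' [Ha' Hfg]]; exists a'; split; [exact Ha' | apply HR; exact Hfg].
Qed.

Hypothesis lam_singleton : forall l, singleton_preserving T (ar l) (lam l).
Hypothesis lam_expressive : strongly_expressive T L ar lam.

Lemma lambda_simulation_fmap_agree (X : Type) (xi : X -> T X) (Y : Type) (zeta : Y -> T Y)
    (S : X -> Y -> Prop) (HS : lambda_simulation T L ar lam X xi Y zeta S)
    (Z : Type) (p : X -> Z) (r : Y -> Z) (Hpr : forall a b, S a b -> p a = r b)
    (x : X) (y : Y) :
  S x y -> fmap X Z p (xi x) = fmap Y Z r (zeta y).
Proof.
  intros Hxy.
  destruct (lam_expressive X (xi x)) as [l [xs Hxs]].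
  assert (Hx : lam l X (fun i a => a = xs i) (xi x)) by (apply Hxs; reflexivity).
  destruct (lam_singleton l Z (fun i => p (xs i))) as [u Hu].
  assert (Ep : fmap X Z p (xi x) = u).
  { apply Hu; eapply lam_monotone; [|exact (lifting_fmap_image l X Z p _ _ Hx)].
    intros i z [a [-> <-]]; reflexivity. }
  assert (Er : fmap Y Z r (zeta y) = u).
  { apply Hu; eapply lam_monotone;
      [|exact (lifting_fmap_image l Y Z r _ _ (HS l _ x y Hxy Hx))].
    intros i z [b [[a [-> Hab]] <-]]; symmetry; exact (Hpr _ _ Hab). }
  congruence.
Qed.

End Liftings.

Section Quotients.

Variables (T : Type -> Type) (fmap : forall X Y : Type, (X -> Y) -> T X -> T Y).

Lemma coalg_morphism_comp (HT : is_functor T fmap)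
    (X : Type) (xi : X -> T X) (Y : Type) (zeta : Y -> T Y) (Z : Type) (theta : Z -> T Z)
    (f : X -> Y) (g : Y -> Z) :
  coalg_morphism T fmap X xi Y zeta f -> coalg_morphism T fmap Y zeta Z theta g ->
  coalg_morphism T fmap X xi Z theta (fun a => g (f a)).
Proof.
  intros Hf Hg a; destruct HT as [_ fmap_comp].
  rewrite fmap_comp, Hf; apply Hg.
Qed.

Definition coprod_coalg (X : Type) (xi : X -> T X) (Y : Type) (zeta : Y -> T Y)
    (w : X + Y) : T (X + Y) :=
  match w with
  | inl a => fmap X (X + Y) inl (xi a)
  | inr b => fmap Y (X + Y) inr (zeta b)
  end.

Lemma inl_coalg_morphism (X : Type) (xi : X -> T X) (Y : Type) (zeta : Y -> T Y) :
  coalg_morphism T fmap X xi (X + Y) (coprod_coalg X xi Y zeta) inl.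
Proof. intros a; reflexivity. Qed.

Lemma inr_coalg_morphism (X : Type) (xi : X -> T X) (Y : Type) (zeta : Y -> T Y) :
  coalg_morphism T fmap Y zeta (X + Y) (coprod_coalg X xi Y zeta) inr.
Proof. intros b; reflexivity. Qed.

(* The structure on [Q] is read off an arbitrary preimage, chosen by [epsilon];
   [w0] only makes the choice total. *)
Lemma coalg_structure_on_image (W : Type) (omega : W -> T W) (Q : Type) (q : W -> Q)
    (w0 : W) :
  (forall w w', q w = q w' -> fmap W Q q (omega w) = fmap W Q q (omega w')) ->
  exists theta : Q -> T Q, coalg_morphism T fmap W omega Q theta q.
Proof.
  intros Hq.
  exists (fun c => fmap W Q q (omega (epsilon (inhabits w0) (fun w => q w = c)))).
  intros w; symmetry; apply Hq.
  exact (epsilon_spec (inhabits w0) (fun w' => q w' = q w) (ex_intro _ w eq_refl)).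
Qed.

End Quotients.

Section EquivalenceClasses.

Variables (W : Type) (R : relation W).

Lemma clos_rst_fun_eq (Z : Type) (f : W -> Z) :
  (forall a b, R a b -> f a = f b) ->
  forall a b, clos_refl_sym_trans W R a b -> f a = f b.
Proof.
  intros HR a b Hab; induction Hab; [auto | reflexivity | congruence | congruence].
Qed.

Lemma clos_rst_class_eq (a b : W) :
  clos_refl_sym_trans W R a = clos_refl_sym_trans W R b <->
  clos_refl_sym_trans W R a b.
Proof.
  split.
  - intros Hab; rewrite Hab; apply rst_refl.
  - intros Hab; apply functional_extensionality; intros c.
    apply propositional_extensionality; split; intros Hc.
    + apply rst_trans with a; [apply rst_sym|]; assumption.
    + apply rst_trans with b; assumption.
Qed.

End EquivalenceClasses.

Definition sum_rel {X Y : Type} (S : X -> Y -> Prop) (v w : X + Y) : Prop :=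
  match v, w with
  | inl a, inr b => S a b
  | _, _ => False
  end.

Lemma lambda_simulation_behav_equiv
    (T : Type -> Type) (fmap : forall X Y : Type, (X -> Y) -> T X -> T Y)
    (HT : is_functor T fmap)
    (L : Type) (ar : L -> nat) (lam : forall l : L, pred_lifting T (ar l))
    (Hnat : forall l : L, natural_lifting T fmap (ar l) (lam l))
    (Hmono : forall l : L, monotone_lifting T (ar l) (lam l))
    (Hsing : forall l : L, singleton_preserving T (ar l) (lam l))
    (Hexp : strongly_expressive T L ar lam)
    (X : Type) (xi : X -> T X) (Y : Type) (zeta : Y -> T Y)
    (S : X -> Y -> Prop) (HS : lambda_simulation T L ar lam X xi Y zeta S)
    (x : X) (y : Y) :
  S x y -> behav_equiv T fmap X xi Y zeta x y.
Proof.
  intros Hxy.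
  set (omega := coprod_coalg T fmap X xi Y zeta).
  (* Quotient map to equivalence classes, represented as predicates on [X + Y]. *)
  set (q := clos_refl_sym_trans (X + Y) (sum_rel S)).
  assert (q_agree : forall a b, S a b -> q (inl a) = q (inr b)).
  { intros a b Hab; apply clos_rst_class_eq, rst_step; exact Hab. }
  assert (q_respects : forall w w', q w = q w' ->
            fmap _ _ q (omega w) = fmap _ _ q (omega w')).
  { intros w w' Hww'; apply clos_rst_class_eq in Hww'.
    revert w w' Hww'; apply clos_rst_fun_eq.
    intros [a|a] [b|b] Hab; try contradiction.
    destruct HT as [_ fmap_comp]; cbn; rewrite <- !fmap_comp.
    exact (lambda_simulation_fmap_agree T fmap L ar lam Hnat Hmono Hsing Hexp
             X xi Y zeta S HS _ _ _ q_agree a b Hab). }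
  destruct (coalg_structure_on_image T fmap _ omega _ q (inl x) q_respects)
    as [theta Hq].
  exists (X + Y -> Prop), theta, (fun a => q (inl a)), (fun b => q (inr b)).
  split; [|split].
  - exact (coalg_morphism_comp T fmap HT _ _ _ _ _ _ _ _
             (inl_coalg_morphism T fmap X xi Y zeta) Hq).
  - exact (coalg_morphism_comp T fmap HT _ _ _ _ _ _ _ _
             (inr_coalg_morphism T fmap X xi Y zeta) Hq).
  - exact (q_agree x y Hxy).
Qed.

Theorem mainTheorem6
  (T : Type -> Type) (fmap : forall X Y : Type, (X -> Y) -> T X -> T Y)
  (HT : is_functor T fmap)
  (L : Type) (ar : L -> nat) (lam : forall l : L, pred_lifting T (ar l))
  (Hnat : forall l : L, natural_lifting T fmap (ar l) (lam l))
  (Hmono : forall l : L, monotone_lifting T (ar l) (lam l))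
  (Hsing : forall l : L, singleton_preserving T (ar l) (lam l))
  (Hexp : strongly_expressive T L ar lam) :
  forall (X : Type) (xi : X -> T X) (Y : Type) (zeta : Y -> T Y) (x : X) (y : Y),
    lambda_bisimilar T L ar lam X xi Y zeta x y <->
    behav_equiv T fmap X xi Y zeta x y.
Proof.
  intros X xi Y zeta x y; split.
  - intros [S [[HS _] Hxy]].
    exact (lambda_simulation_behav_equiv T fmap HT L ar lam Hnat Hmono Hsing Hexp
             X xi Y zeta S HS x y Hxy).
  - intros [Z [theta [f [g [Hf [Hg Hxy]]]]]].
    exists (fun a b => f a = g b); split; [split|exact Hxy].
    + exact (kernel_lambda_simulation T fmap L ar lam Hnat Hmono
               X xi Y zeta Z theta f g Hf Hg _ (fun a b => iff_refl _)).
    + apply (kernel_lambda_simulation T fmap L ar lam Hnat Hmono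
               Y zeta X xi Z theta g f Hg Hf).
      intros b a; split; apply eq_sym.
Qed.
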